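(* Let $a\le b<\infty$ and $\beta,\eta,\nu>0$ with $\eta^2<2\beta\nu$, and set $\mu=\eta/\nu$, $\sigma=2\beta/\nu$. Consider the problem $$\sup_f\ \int_a^\infty \mathbb{I}(x>b)f(x)\,dx\quad\text{s.t.}\quad \int_a^\infty f(x)dx=\beta,\ \ f(a)=f(a+)=\eta,\ \ f'_+(a)\ge-\nu,\ \ f\text{ convex on }[a,\infty),\ \ f\ge0\text{ on }[a,\infty),$$ over functions $f:[a,\infty)\to\mathbb{R}$, and denote its optimal value by $z^*=z^*(a,b)$. Then $$z^*=\begin{cases}\frac{\nu}{2}(\sigma-\mu^2) & \text{if }\mu\le b-a,\\ \frac{\nu}{2}\big[\sigma-2(b-a)\mu+(b-a)^2\big]&\text{if }\mu>b-a.\end{cases}$$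
   Context: $f(a+)$ denotes the right limit of $f$ at $a$ and $f'_+$ the right derivative. *)

From Stdlib Require Import Reals.
From Coquelicot Require Import Coquelicot.
Open Scope R_scope.

Definition convex_on_from (f : R -> R) (a : R) : Prop :=
  forall x y t, a <= x -> a <= y -> 0 <= t <= 1 ->
    f (t * x + (1 - t) * y) <= t * f x + (1 - t) * f y.

Definition right_limit (f : R -> R) (a eta : R) : Prop :=
  filterlim f (at_right a) (locally eta).

Definition right_deriv_ge (f : R -> R) (a c : R) : Prop :=
  exists l : Rbar,
    filterlim (fun h => (f (a + h) - f a) / h) (at_right 0) (Rbar_locally l)
    /\ Rbar_le (Finite c) l.

Definition ind_gt (b : R) (f : R -> R) : R -> R :=
  fun x => if Rlt_dec b x then f x else 0.

Definition feasible (a beta eta nu : R) (f : R -> R) : Prop :=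
  is_RInt_gen f (at_point a) (Rbar_locally p_infty) beta /\
  f a = eta /\ right_limit f a eta /\
  right_deriv_ge f a (- nu) /\
  convex_on_from f a /\
  (forall x, a <= x -> 0 <= f x).

Definition objective_values (a b beta eta nu : R) : R -> Prop :=
  fun z => exists f, feasible a beta eta nu f /\
    is_RInt_gen (ind_gt b f) (at_point a) (Rbar_locally p_infty) z.

Definition zstar (a b beta eta nu : R) : Rbar :=
  Lub_Rbar (objective_values a b beta eta nu).

From Stdlib Require Import Reals Lra Psatz.
From Coquelicot Require Import Coquelicot.
Open Scope R_scope.

(* A feasible f is convex with f(a) = eta and right derivative at least -nu, so it lies
   above its tangent line eta - nu (x - a); being nonnegative, it lies above the tent
   max(eta - nu (x - a), 0).  Hence its mass on [a, b] is at least the mass of the tent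
   there, and the objective beta - int_a^b f is at most beta minus that mass.
   Conversely, follow the tent down to a small height v > 0 and continue with a smaller
   slope, chosen so that the total mass is beta (possible because eta^2 < 2 beta nu).
   This convex piecewise linear function is feasible and exceeds the tent by at most v,
   so letting v -> 0 shows that the bound is the supremum. *)

Lemma is_RInt_affine (p q r x1 x2 : R) :
  is_RInt (fun x => p - q * (x - r)) x1 x2
    (p * (x2 - x1) - q * ((x2 - r) ^ 2 - (x1 - r) ^ 2) / 2).
Proof.
  set (F := fun x => p * x - q * (x - r) ^ 2 / 2).
  replace (p * (x2 - x1) - q * ((x2 - r) ^ 2 - (x1 - r) ^ 2) / 2)
    with (minus (F x2) (F x1)) by (unfold F, minus, plus, opp; simpl; field).
  apply (@is_RInt_derive R_CompleteNormedModule F).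
  - intros x _. unfold F. auto_derive; [easy | field].
  - intros x _. apply (ex_derive_continuous (fun y => p - q * (y - r))). auto_derive; easy.
Qed.

Lemma is_RInt_const_R (c x1 x2 : R) : is_RInt (fun _ => c) x1 x2 (c * (x2 - x1)).
Proof.
  pose proof (is_RInt_affine c 0 0 x1 x2) as H.
  replace (c * (x2 - x1) - 0 * ((x2 - 0) ^ 2 - (x1 - 0) ^ 2) / 2) with (c * (x2 - x1)) in H
    by field.
  eapply is_RInt_ext; [| exact H]. intros; simpl; ring.
Qed.

Lemma is_RInt_zero (x1 x2 : R) : is_RInt (fun _ => 0) x1 x2 0.
Proof.
  pose proof (is_RInt_const_R 0 x1 x2) as H. rewrite Rmult_0_l in H. exact H.
Qed.

Lemma ex_RInt_of_is_RInt_gen (f : R -> R) (a l b : R) :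
  is_RInt_gen f (at_point a) (Rbar_locally p_infty) l -> a <= b -> ex_RInt f a b.
Proof.
  intros Hf Hab.
  destruct (Hf (fun _ => True) filter_true) as [Q P HQ [M HM] HQP].
  set (y := Rmax b (M + 1)).
  destruct (HQP a y HQ) as [v [Hv _]].
  { apply HM. generalize (Rmax_r b (M + 1)). unfold y. lra. }
  apply (@ex_RInt_Chasles_1 R_CompleteNormedModule f a b y).
  - split; [exact Hab | apply Rmax_l].
  - exists v. exact Hv.
Qed.

Lemma is_RInt_gen_pinfty_unique (f : R -> R) (a l1 l2 : R) :
  is_RInt_gen f (at_point a) (Rbar_locally p_infty) l1 ->
  is_RInt_gen f (at_point a) (Rbar_locally p_infty) l2 -> l1 = l2.
Proof.
  intros H1 H2.
  apply (@is_RInt_gen_unique R_CompleteNormedModule) in H1.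
  apply (@is_RInt_gen_unique R_CompleteNormedModule) in H2.
  congruence.
  all: apply Proper_StrongProper; apply Rbar_locally_filter || apply at_point_filter.
Qed.

Lemma is_RInt_gen_pinfty_ext (f g : R -> R) (c l : R) :
  (forall x, c < x -> f x = g x) ->
  is_RInt_gen f (at_point c) (Rbar_locally p_infty) l ->
  is_RInt_gen g (at_point c) (Rbar_locally p_infty) l.
Proof.
  intros Hfg. apply is_RInt_gen_ext.
  apply Filter_prod with (fun x => x = c) (fun y => c < y).
  - reflexivity.
  - exists c. auto.
  - intros x y -> Hy z Hz. simpl in Hz.
    rewrite Rmin_left, Rmax_right in Hz by lra. apply Hfg. lra.
Qed.

Lemma is_RInt_gen_pinfty_of_vanishing (f : R -> R) (a c l : R) :
  is_RInt f a c l -> (forall x, c < x -> f x = 0) ->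
  is_RInt_gen f (at_point a) (Rbar_locally p_infty) l.
Proof.
  intros Hac Hvan.
  assert (Htail : is_RInt_gen f (at_point c) (Rbar_locally p_infty) 0).
  { intros P HP. apply Filter_prod with (fun x => x = c) (fun y => c < y).
    - reflexivity.
    - exists c. auto.
    - intros x y -> Hy. exists 0. split.
      + eapply is_RInt_ext; [| apply is_RInt_zero].
        intros z Hz. simpl in Hz. rewrite Rmin_left, Rmax_right in Hz by lra.
        symmetry. apply Hvan. lra.
      + apply locally_singleton. exact HP. }
  replace l with (plus l 0) by (unfold plus; simpl; ring).
  apply (@is_RInt_gen_Chasles R_NormedModule _ _ _ _ f c); [| exact Htail].
  apply is_RInt_gen_at_point. exact Hac.
Qed.

Lemma is_RInt_gen_ind_gt (f : R -> R) (a b l : R) :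
  a <= b ->
  is_RInt_gen f (at_point a) (Rbar_locally p_infty) l ->
  is_RInt_gen (ind_gt b f) (at_point a) (Rbar_locally p_infty) (l - RInt f a b).
Proof.
  intros Hab Hf.
  assert (Hhead : is_RInt f a b (RInt f a b))
    by (apply (@RInt_correct R_CompleteNormedModule), (ex_RInt_of_is_RInt_gen f a l); assumption).
  assert (Htail : is_RInt_gen f (at_point b) (Rbar_locally p_infty) (plus (opp (RInt f a b)) l)).
  { apply (@is_RInt_gen_Chasles R_NormedModule _ _ _ _ f a); [| exact Hf].
    apply is_RInt_gen_at_point, (@is_RInt_swap R_NormedModule). exact Hhead. }
  assert (Hzero : is_RInt (ind_gt b f) a b 0).
  { eapply is_RInt_ext; [| apply is_RInt_zero].
    intros x Hx. rewrite Rmin_left, Rmax_right in Hx by lra.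
    unfold ind_gt. destruct (Rlt_dec b x); [lra | reflexivity]. }
  replace (l - RInt f a b) with (plus 0 (plus (opp (RInt f a b)) l))
    by (unfold plus, opp; simpl; ring).
  apply (@is_RInt_gen_Chasles R_NormedModule _ _ _ _ _ b).
  { apply is_RInt_gen_at_point. exact Hzero. }
  apply (is_RInt_gen_pinfty_ext f); [| exact Htail].
  intros x Hx. unfold ind_gt. destruct (Rlt_dec b x); [reflexivity | lra].
Qed.

Lemma at_right_interval (x t : R) : 0 < t -> at_right x (fun y => x < y < x + t).
Proof.
  intros Ht. exists (mkposreal t Ht). intros y Hy Hxy. split; [exact Hxy |].
  unfold ball in Hy; simpl in Hy; unfold AbsRing_ball, abs, minus, plus, opp in Hy; simpl in Hy.
  rewrite Rabs_right in Hy by lra. lra.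
Qed.

Lemma convex_on_from_affine (p q r a : R) : convex_on_from (fun x => p - q * (x - r)) a.
Proof. intros x y t _ _ _. apply Req_le. ring. Qed.

Lemma convex_on_from_const (c a : R) : convex_on_from (fun _ => c) a.
Proof. intros x y t _ _ _. apply Req_le. ring. Qed.

Lemma convex_on_from_Rmax (f g : R -> R) (a : R) :
  convex_on_from f a -> convex_on_from g a -> convex_on_from (fun x => Rmax (f x) (g x)) a.
Proof.
  intros Hf Hg x y t Hx Hy Ht.
  assert (Hx1 := Rmax_l (f x) (g x)). assert (Hx2 := Rmax_r (f x) (g x)).
  assert (Hy1 := Rmax_l (f y) (g y)). assert (Hy2 := Rmax_r (f y) (g y)).
  apply Rmax_lub; [specialize (Hf x y t Hx Hy Ht) | specialize (Hg x y t Hx Hy Ht)]; nra.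
Qed.

Lemma convex_chord_slope_le (f : R -> R) (a x h : R) :
  convex_on_from f a -> a < x -> 0 < h <= x - a ->
  (f (a + h) - f a) / h <= (f x - f a) / (x - a).
Proof.
  intros Hconv Hx Hh.
  set (t := h / (x - a)).
  assert (Ht : 0 <= t <= 1).
  { unfold t. split; [apply Rlt_le, Rdiv_lt_0_compat; lra |].
    apply Rle_div_l; lra. }
  assert (Hc := Hconv x a t (Rlt_le _ _ Hx) (Rle_refl a) Ht).
  replace (t * x + (1 - t) * a) with (a + h) in Hc by (unfold t; field; lra).
  apply Rle_div_l; [lra |].
  replace ((f x - f a) / (x - a) * h) with (t * (f x - f a)) by (unfold t; field; lra).
  lra.
Qed.

Lemma convex_right_deriv_tangent (f : R -> R) (a c x : R) :
  convex_on_from f a -> right_deriv_ge f a c -> a <= x -> f a + c * (x - a) <= f x.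
Proof.
  intros Hconv [l [Hl Hcl]] Hx.
  destruct (Req_dec x a) as [-> | Hxa]; [lra |].
  apply Rnot_lt_le. intros Hlt.
  set (k := (f x - f a) / (x - a)).
  assert (Hk : k < c) by (apply Rlt_div_l; lra).
  assert (Hev : at_right 0 (fun h => k < (f (a + h) - f a) / h)).
  { apply Hl. destruct l as [l | |]; simpl in Hcl.
    - apply (open_Rbar_gt' (Finite l) (Finite k)). simpl. lra.
    - apply (open_Rbar_gt' p_infty (Finite k)). exact I.
    - contradiction. }
  destruct (@Hierarchy.filter_ex _ _ (at_right_proper_filter 0) _
              (filter_and _ _ Hev (at_right_interval 0 (x - a) ltac:(lra))))
    as [h [Hkh Hh]].
  apply (Rlt_not_le _ _ Hkh), convex_chord_slope_le; [exact Hconv | lra | lra].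
Qed.

Lemma right_limit_deriv_of_affine_germ (f : R -> R) (a c t : R) :
  0 < t -> (forall x, a <= x <= a + t -> f x = f a + c * (x - a)) ->
  right_limit f a (f a) /\ right_deriv_ge f a c.
Proof.
  intros Ht Hf. split.
  - apply (filterlim_ext_loc (fun x => f a + c * (x - a))).
    + eapply filter_imp; [| apply (at_right_interval a t Ht)].
      intros x Hx. symmetry. apply Hf. lra.
    + apply (filterlim_filter_le_1 _ (filter_le_within _)).
      assert (Hcont : continuous (fun x => f a + c * (x - a)) a)
        by (apply (ex_derive_continuous (fun x => f a + c * (x - a))); auto_derive; easy).
      unfold continuous in Hcont. replace (f a + c * (a - a)) with (f a) in Hcont by ring.
      exact Hcont.
  - exists (Finite c). split; [| apply Rle_refl].
    apply (filterlim_ext_loc (fun _ => c)); [| apply filterlim_const].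
    eapply filter_imp; [| apply (at_right_interval 0 t Ht)].
    intros h Hh. rewrite (Hf (a + h)) by lra. field. lra.
Qed.

Definition tent (a eta nu x : R) : R := Rmax (eta - nu * (x - a)) 0.

Definition tent_mass (a b eta nu : R) : R :=
  if Rle_dec (eta / nu) (b - a) then eta ^ 2 / (2 * nu)
  else eta * (b - a) - nu * (b - a) ^ 2 / 2.

Lemma is_RInt_tent (a b eta nu : R) :
  a <= b -> 0 <= eta -> 0 < nu -> is_RInt (tent a eta nu) a b (tent_mass a b eta nu).
Proof.
  intros Hab Heta Hnu. unfold tent_mass.
  assert (Hmu : 0 <= eta / nu) by (apply Rdiv_le_0_compat; lra).
  destruct (Rle_dec (eta / nu) (b - a)) as [Hle | Hgt].
  - set (m := a + eta / nu).
    assert (Hm : eta - nu * (m - a) = 0) by (unfold m; field; lra).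
    replace (eta ^ 2 / (2 * nu)) with
      (plus (eta * (m - a) - nu * ((m - a) ^ 2 - (a - a) ^ 2) / 2) 0)
      by (unfold plus, m; simpl; field; lra).
    apply (@is_RInt_Chasles R_NormedModule _ a m b).
    + eapply is_RInt_ext; [| apply is_RInt_affine].
      intros x Hx. rewrite Rmin_left, Rmax_right in Hx by (unfold m; lra).
      unfold tent. rewrite Rmax_left; [reflexivity | nra].
    + eapply is_RInt_ext; [| apply is_RInt_zero].
      intros x Hx. rewrite Rmin_left, Rmax_right in Hx by (unfold m in *; lra).
      unfold tent. rewrite Rmax_right; [reflexivity | nra].
  - replace (eta * (b - a) - nu * (b - a) ^ 2 / 2) with
      (eta * (b - a) - nu * ((b - a) ^ 2 - (a - a) ^ 2) / 2) by field.
    eapply is_RInt_ext; [| apply is_RInt_affine].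
    intros x Hx. rewrite Rmin_left, Rmax_right in Hx by lra.
    assert (Hx' : nu * (x - a) < nu * (eta / nu))
      by (apply Rmult_lt_compat_l; lra).
    replace (nu * (eta / nu)) with eta in Hx' by (field; lra).
    unfold tent. rewrite Rmax_left; [reflexivity | lra].
Qed.

Lemma tent_mass_le_RInt (f : R -> R) (a b eta nu : R) :
  a <= b -> 0 <= eta -> 0 < nu -> ex_RInt f a b ->
  (forall x, a < x < b -> tent a eta nu x <= f x) ->
  tent_mass a b eta nu <= RInt f a b.
Proof.
  intros Hab Heta Hnu Hf Hle.
  apply (is_RInt_le (tent a eta nu) f a b); auto.
  - apply is_RInt_tent; assumption.
  - apply (@RInt_correct R_CompleteNormedModule). exact Hf.
Qed.

Lemma RInt_le_tent_mass_add (f : R -> R) (a b eta nu v : R) :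
  a <= b -> 0 <= eta -> 0 < nu -> ex_RInt f a b ->
  (forall x, a < x < b -> f x <= tent a eta nu x + v) ->
  RInt f a b <= tent_mass a b eta nu + v * (b - a).
Proof.
  intros Hab Heta Hnu Hf Hle.
  pose proof (@is_RInt_plus R_NormedModule _ _ a b _ _
                (is_RInt_tent a b eta nu Hab Heta Hnu) (is_RInt_const_R v a b)) as Hsum.
  apply (is_RInt_le f _ a b _ _ Hab (@RInt_correct R_CompleteNormedModule _ _ _ Hf) Hsum).
  intros x Hx. unfold plus; simpl. specialize (Hle x Hx). lra.
Qed.

Lemma feasible_tent_le (f : R -> R) (a beta eta nu x : R) :
  feasible a beta eta nu f -> a <= x -> tent a eta nu x <= f x.
Proof.
  intros [_ [Hfa [_ [Hderiv [Hconv Hpos]]]]] Hx.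
  pose proof (convex_right_deriv_tangent f a (- nu) x Hconv Hderiv Hx) as Htan.
  apply Rmax_lub; [rewrite <- Hfa; lra | apply Hpos; exact Hx].
Qed.

Section Kink.

Variables (a eta nu v s : R).
Hypotheses (Hnu : 0 < nu) (Hv : 0 < v < eta) (Hs : 0 < s <= nu).

Definition kink_knee : R := a + (eta - v) / nu.

Definition kink (x : R) : R :=
  Rmax (Rmax (eta - nu * (x - a)) (v - s * (x - kink_knee))) 0.

Lemma kink_knee_gt : a < kink_knee.
Proof. unfold kink_knee. assert (0 < (eta - v) / nu) by (apply Rdiv_lt_0_compat; lra). lra. Qed.

Lemma kink_steep_line_through_knee (x : R) : eta - nu * (x - a) = v - nu * (x - kink_knee).
Proof. unfold kink_knee. field. lra. Qed.

Lemma kink_eq_steep (x : R) : x <= kink_knee -> kink x = eta - nu * (x - a).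
Proof.
  intros Hx. unfold kink. rewrite kink_steep_line_through_knee.
  assert (0 <= (nu - s) * (kink_knee - x)) by (apply Rmult_le_pos; lra).
  rewrite (Rmax_left (v - nu * _)) by nra. rewrite Rmax_left; nra.
Qed.

Lemma kink_eq_shallow (x : R) :
  kink_knee <= x <= kink_knee + v / s -> kink x = v - s * (x - kink_knee).
Proof.
  intros Hx. unfold kink. rewrite kink_steep_line_through_knee.
  assert (0 <= (nu - s) * (x - kink_knee)) by (apply Rmult_le_pos; lra).
  assert (s * (x - kink_knee) <= v).
  { rewrite Rmult_comm. apply Rle_div_r; lra. }
  rewrite (Rmax_right (v - nu * _)) by nra. rewrite Rmax_left; lra.
Qed.

Lemma kink_eq_zero (x : R) : kink_knee + v / s <= x -> kink x = 0.
Proof.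
  intros Hx. unfold kink. rewrite kink_steep_line_through_knee.
  assert (0 < v / s) by (apply Rdiv_lt_0_compat; lra).
  assert (0 <= (nu - s) * (x - kink_knee)) by (apply Rmult_le_pos; lra).
  assert (v <= s * (x - kink_knee)).
  { rewrite Rmult_comm. apply Rle_div_l; lra. }
  rewrite (Rmax_right (v - nu * _)) by nra. rewrite Rmax_right; lra.
Qed.

Lemma kink_nonneg (x : R) : 0 <= kink x.
Proof. apply Rmax_r. Qed.

Lemma kink_le_tent_add (x : R) : kink x <= tent a eta nu x + v.
Proof.
  assert (Htent := Rmax_l (eta - nu * (x - a)) 0).
  assert (Htent0 := Rmax_r (eta - nu * (x - a)) 0).
  fold (tent a eta nu x) in Htent, Htent0.
  destruct (Rle_dec x kink_knee) as [Hx | Hx].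
  - rewrite kink_eq_steep by exact Hx. lra.
  - unfold kink. rewrite kink_steep_line_through_knee in *.
    apply Rmax_lub; [apply Rmax_lub |]; nra.
Qed.

Lemma kink_convex : convex_on_from kink a.
Proof.
  apply (convex_on_from_Rmax (fun x => Rmax _ _) (fun _ => 0)); [| apply convex_on_from_const].
  apply convex_on_from_Rmax; apply convex_on_from_affine.
Qed.

Lemma is_RInt_kink :
  is_RInt kink a (kink_knee + v / s) ((eta ^ 2 - v ^ 2) / (2 * nu) + v ^ 2 / (2 * s)).
Proof.
  assert (Hknee := kink_knee_gt).
  assert (0 < v / s) by (apply Rdiv_lt_0_compat; lra).
  replace ((eta ^ 2 - v ^ 2) / (2 * nu) + v ^ 2 / (2 * s)) with
    (plus (eta * (kink_knee - a) - nu * ((kink_knee - a) ^ 2 - (a - a) ^ 2) / 2)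
          (v * (kink_knee + v / s - kink_knee)
           - s * ((kink_knee + v / s - kink_knee) ^ 2 - (kink_knee - kink_knee) ^ 2) / 2))
    by (unfold plus, kink_knee; simpl; field; lra).
  apply (@is_RInt_Chasles R_NormedModule _ a kink_knee).
  - eapply is_RInt_ext; [| apply is_RInt_affine].
    intros x Hx. rewrite Rmin_left, Rmax_right in Hx by lra.
    symmetry. apply kink_eq_steep. lra.
  - eapply is_RInt_ext; [| apply is_RInt_affine].
    intros x Hx. rewrite Rmin_left, Rmax_right in Hx by lra.
    symmetry. apply kink_eq_shallow. lra.
Qed.

End Kink.

Definition kink_slope (beta eta nu v : R) : R := v ^ 2 / (2 * beta - (eta ^ 2 - v ^ 2) / nu).

Lemma kink_slope_bounds (beta eta nu v : R) :
  0 < nu -> eta ^ 2 < 2 * beta * nu -> 0 < v -> 0 < kink_slope beta eta nu v <= nu.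
Proof.
  intros Hnu Hsq Hv. unfold kink_slope.
  assert (HD : nu * (2 * beta - (eta ^ 2 - v ^ 2) / nu) = 2 * beta * nu - eta ^ 2 + v ^ 2)
    by (field; lra).
  assert (HDpos : 0 < 2 * beta - (eta ^ 2 - v ^ 2) / nu) by nra.
  split; [apply Rdiv_lt_0_compat; nra |].
  apply Rle_div_l; nra.
Qed.

Lemma kink_slope_mass (beta eta nu v : R) :
  0 < nu -> eta ^ 2 < 2 * beta * nu -> 0 < v ->
  (eta ^ 2 - v ^ 2) / (2 * nu) + v ^ 2 / (2 * kink_slope beta eta nu v) = beta.
Proof.
  intros Hnu Hsq Hv. unfold kink_slope.
  assert (0 < 2 * beta * nu - (eta ^ 2 - v ^ 2)) by nra.
  field. repeat split; lra.
Qed.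

Lemma kink_feasible (a beta eta nu v : R) :
  0 < nu -> eta ^ 2 < 2 * beta * nu -> 0 < v < eta ->
  feasible a beta eta nu (kink a eta nu v (kink_slope beta eta nu v)).
Proof.
  intros Hnu Hsq Hv.
  assert (Hs := kink_slope_bounds beta eta nu v Hnu Hsq (proj1 Hv)).
  set (s := kink_slope beta eta nu v) in *.
  set (g := kink a eta nu v s).
  assert (Hknee := kink_knee_gt a eta nu v Hnu Hv).
  assert (Hsteep : forall x, x <= kink_knee a eta nu v -> g x = eta - nu * (x - a))
    by (intros; apply kink_eq_steep; assumption).
  assert (Hga : g a = eta) by (rewrite Hsteep by lra; ring).
  destruct (right_limit_deriv_of_affine_germ g a (- nu) (kink_knee a eta nu v - a))
    as [Hlim Hderiv]; [lra | intros x Hx; rewrite Hga, Hsteep by lra; ring |].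
  rewrite Hga in Hlim.
  repeat split; [| exact Hga | exact Hlim | exact Hderiv | apply kink_convex; assumption
                 | intros x _; apply kink_nonneg].
  apply (is_RInt_gen_pinfty_of_vanishing g a (kink_knee a eta nu v + v / s)).
  - rewrite <- (kink_slope_mass beta eta nu v) by lra. apply is_RInt_kink; assumption.
  - intros x Hx. apply kink_eq_zero; lra.
Qed.

Lemma objective_valuesE (a b beta eta nu z : R) :
  a <= b ->
  objective_values a b beta eta nu z <->
  exists f, feasible a beta eta nu f /\ z = beta - RInt f a b.
Proof.
  intros Hab. split.
  - intros [f [Hf Hz]]. exists f. split; [exact Hf |].
    apply (is_RInt_gen_pinfty_unique (ind_gt b f) a); [exact Hz |].
    apply is_RInt_gen_ind_gt; [exact Hab | apply Hf].
  - intros [f [Hf ->]]. exists f. split; [exact Hf |].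
    apply is_RInt_gen_ind_gt; [exact Hab | apply Hf].
Qed.

Lemma Lub_Rbar_eq_of_approx (E : R -> Prop) (V : R) :
  (forall z, E z -> z <= V) ->
  (forall eps, 0 < eps -> exists z, E z /\ V - eps < z) ->
  Lub_Rbar E = Finite V.
Proof.
  intros Hub Happrox. apply is_lub_Rbar_unique. split.
  - intros z Hz. apply Hub, Hz.
  - intros [M | |] HM; simpl; [| exact I |].
    + apply Rnot_lt_le. intros HMV.
      destruct (Happrox (V - M) ltac:(lra)) as [z [Hz Hlt]].
      specialize (HM z Hz). simpl in HM. lra.
    + destruct (Happrox 1 Rlt_0_1) as [z [Hz _]]. exact (HM z Hz).
Qed.

Lemma objective_values_le (a b beta eta nu z : R) :
  a <= b -> 0 < eta -> 0 < nu ->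
  objective_values a b beta eta nu z -> z <= beta - tent_mass a b eta nu.
Proof.
  intros Hab Heta Hnu Hz.
  apply objective_valuesE in Hz as [f [Hf ->]]; [| exact Hab].
  enough (tent_mass a b eta nu <= RInt f a b) by lra.
  apply tent_mass_le_RInt; try lra.
  - apply (ex_RInt_of_is_RInt_gen f a beta); [apply Hf | exact Hab].
  - intros x Hx. apply (feasible_tent_le f a beta); [exact Hf | lra].
Qed.

Lemma objective_values_approx (a b beta eta nu eps : R) :
  a <= b -> 0 < eta -> 0 < nu -> eta ^ 2 < 2 * beta * nu -> 0 < eps ->
  exists z, objective_values a b beta eta nu z /\ beta - tent_mass a b eta nu - eps < z.
Proof.
  intros Hab Heta Hnu Hsq Heps.
  set (v := Rmin (eta / 2) (eps / (b - a + 1))).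
  assert (Hv : 0 < v < eta).
  { split; [apply Rmin_pos; apply Rdiv_lt_0_compat; lra |].
    generalize (Rmin_l (eta / 2) (eps / (b - a + 1))). fold v. lra. }
  assert (Hv_small : v * (b - a) < eps).
  { assert (v * (b - a + 1) <= eps) by (apply Rle_div_r; [lra | apply Rmin_r]).
    nra. }
  pose proof (kink_feasible a beta eta nu v Hnu Hsq Hv) as Hg.
  set (g := kink a eta nu v (kink_slope beta eta nu v)) in Hg.
  exists (beta - RInt g a b). split.
  - apply objective_valuesE; [exact Hab |]. exists g. split; [exact Hg | reflexivity].
  - enough (RInt g a b <= tent_mass a b eta nu + v * (b - a)) by lra.
    apply RInt_le_tent_mass_add; try lra.
    + apply (ex_RInt_of_is_RInt_gen g a beta); [apply Hg | exact Hab].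
    + intros x _. apply kink_le_tent_add; try lra. apply kink_slope_bounds; lra.
Qed.

Theorem theorem3 (a b beta eta nu : R) :
  a <= b -> 0 < beta -> 0 < eta -> 0 < nu -> eta ^ 2 < 2 * beta * nu ->
  let mu := eta / nu in
  let sigma := 2 * beta / nu in
  zstar a b beta eta nu =
    Finite (if Rle_dec mu (b - a)
            then nu / 2 * (sigma - mu ^ 2)
            else nu / 2 * (sigma - 2 * (b - a) * mu + (b - a) ^ 2)).
Proof.
  intros Hab Hbeta Heta Hnu Hsq mu sigma.
  transitivity (Finite (beta - tent_mass a b eta nu)).
  - apply Lub_Rbar_eq_of_approx.
    + intros z. apply objective_values_le; assumption.
    + intros eps. apply objective_values_approx; assumption.
  - f_equal. unfold tent_mass, mu, sigma. destruct Rle_dec; field; lra.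
Qed.
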